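(* Let $G$ be a connected finite simple graph with at least one edge such that $\chi(G) = \Delta(G)$ and ${\rm vs}_{\chi}(G) = 1$. Then there exists a vertex $v \in V(G)$ with $d_G(v) = \Delta(G)$ and $\chi(G - v) = \Delta(G) - 1$.
   Context: $\chi(G)$ is the chromatic number, $\Delta(G)$ the maximum degree, and $d_G(v)$ the degree of $v$ in $G$. The chromatic vertex stability number ${\rm vs}_{\chi}(G)$ is the minimum number of vertices of $G$ whose deletion results in a graph $H$ with $\chi(H) = \chi(G)-1$. *)

From mathcomp Require Import all_boot all_order.
Set Implicit Arguments. Unset Strict Implicit. Unset Printing Implicit Defensive.

Definition simple_graph (T : finType) (e : rel T) : Prop :=
  symmetric e /\ irreflexive e.

(* G[S] has a proper colouring with colours {0,..,k-1}.  (The guard x != y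
   is vacuous for simple graphs; it only makes the definition total.) *)
Definition colorable (T : finType) (e : rel T) (S : {set T}) (k : nat) : bool :=
  [exists f : {ffun T -> 'I_k},
     [forall x in S, forall y in S, (x != y) && e x y ==> (f x != f y)]].

Lemma colorable_exists (T : finType) (e : rel T) (S : {set T}) :
  exists k, colorable e S k.
Proof.
exists #|T|; apply/existsP; exists [ffun x => enum_rank x].
apply/forallP => x; apply/implyP => _; apply/forallP => y; apply/implyP => _.
apply/implyP => /andP [nxy _]; rewrite !ffunE.
by apply: contra nxy => /eqP /enum_rank_inj ->.
Qed.

Definition chi (T : finType) (e : rel T) (S : {set T}) : nat :=
  ex_minn (colorable_exists e S).

Definition chiG (T : finType) (e : rel T) : nat := chi e [set: T].

Definition deg (T : finType) (e : rel T) (v : T) : nat := #|[set u | e v u]|.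

Definition maxdeg (T : finType) (e : rel T) : nat := \max_(v : T) deg e v.

Definition vs_chi_eq (T : finType) (e : rel T) (k : nat) : Prop :=
  (exists X : {set T}, #|X| = k /\ chi e (~: X) = (chiG e).-1) /\
  (forall X : {set T}, chi e (~: X) = (chiG e).-1 -> k <= #|X|).

Definition connected_graph (T : finType) (e : rel T) : Prop :=
  forall x y : T, connect e x y.

From mathcomp Require Import all_boot all_order.

Set Implicit Arguments.
Unset Strict Implicit.
Unset Printing Implicit Defensive.

(* Put Delta = chi(G) = k + 1 and call a vertex u good when G - u is
   k-colourable; the vertex given by vs_chi(G) = 1 is good.  If u is good and
   deg u <= k, then every neighbour w of u is good: in a k-colouring of G - u
   either the colour of w occurs on no other neighbour of u, so u can take it
   and w be dropped, or the neighbours of u use fewer than k colours and the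
   colouring extends to all of G.  So if no good vertex had degree Delta,
   goodness would spread over the connected graph and force Delta <= k. *)

Lemma connect_propagate (T : finType) (e : rel T) (P : T -> Prop) x y :
  (forall u w, e u w -> P u -> P w) -> connect e x y -> P x -> P y.
Proof.
move=> eP /connectP[p + ->]; elim: p x => [|z p IHp] x //= /andP[exz pz] Px.
exact: IHp pz (eP x z exz Px).
Qed.

Section Colouring.

Variables (T : finType) (e : rel T).

Definition proper_on (S : {set T}) {k : nat} (c : T -> 'I_k) : Prop :=
  {in S &, forall x y, x != y -> e x y -> c x != c y}.

Lemma colorableP S k :
  reflect (exists c : T -> 'I_k, proper_on S c) (colorable e S k).
Proof.
apply: (iffP existsP) => [[f /forallP fP] | [c cP]].
  exists f => x y xS yS nxy exy.
  move/implyP: (fP x) => /(_ xS) /forall_inP /(_ y yS) /implyP.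
  by apply; apply/andP.
exists (finfun c); apply/forall_inP => x xS; apply/forall_inP => y yS.
by apply/implyP => /andP[nxy exy]; rewrite !ffunE; apply: cP.
Qed.

Lemma chi_colorable S : colorable e S (chi e S).
Proof. by rewrite /chi; case: ex_minnP. Qed.

Lemma chi_le S k : colorable e S k -> chi e S <= k.
Proof. by rewrite /chi; case: ex_minnP => m _; apply. Qed.

Lemma colorable_setC1S u k : colorable e [set~ u] k -> colorable e setT k.+1.
Proof.
move/colorableP=> [c cP]; apply/colorableP.
pose c' x := if x == u then ord_max else widen_ord (leqnSn k) (c x).
have neq_max x : widen_ord (leqnSn k) (c x) != ord_max.
  by rewrite -val_eqE /= ltn_eqF.
exists c' => x y _ _; rewrite /c'.
case: (eqVneq x u) => [->|xu]; case: (eqVneq y u) => [->|yu] //= nxy exy.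
  by rewrite eq_sym neq_max.
by rewrite -val_eqE /= val_eqE cP ?inE.
Qed.

Lemma chi_setC1 u k :
  chiG e = k.+1 -> colorable e [set~ u] k -> chi e [set~ u] = k.
Proof.
move=> chiGk cu; apply/eqP; rewrite eqn_leq chi_le //= -ltnS -chiGk.
exact/chi_le/colorable_setC1S/chi_colorable.
Qed.

Hypothesis e_sym : symmetric e.

Lemma colorable_extend v k (c : T -> 'I_k) a :
  proper_on [set~ v] c -> a \notin c @: [set w | e v w] -> colorable e setT k.
Proof.
move=> cP aN; apply/colorableP; exists (fun x => if x == v then a else c x).
have a_neq w : e v w -> a != c w.
  by move=> evw; apply: contraNneq aN => ->; rewrite imset_f ?inE.
move=> x y _ _.
case: (eqVneq x v) => [->|xv]; case: (eqVneq y v) => [->|yv] //=.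
- by move=> _; apply: a_neq.
- by move=> _; rewrite e_sym eq_sym; apply: a_neq.
- by move=> nxy exy; rewrite cP ?inE.
Qed.

Lemma colorable_recolour v u k (c : T -> 'I_k) :
  proper_on [set~ v] c -> (forall w, e v w -> w != u -> c w != c u) ->
  colorable e [set~ u] k.
Proof.
move=> cP uniq_cu; apply/colorableP.
exists (fun x => if x == v then c u else c x).
move=> x y; rewrite !inE => xu yu.
case: (eqVneq x v) => [->|xv]; case: (eqVneq y v) => [->|yv] //=.
- by move=> _ evy; rewrite eq_sym uniq_cu.
- by rewrite e_sym => _ evx; rewrite uniq_cu.
- by move=> nxy exy; rewrite cP ?inE.
Qed.

Lemma colorable_setC1_adj v u k :
  ~~ colorable e setT k -> deg e v <= k -> colorable e [set~ v] k -> e v u ->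
  colorable e [set~ u] k.
Proof.
move=> notT degv /colorableP[c cP] evu.
have [/existsP[w /and3P[evw wu /eqP cwu]] | /existsPn uniq_cu] :=
  boolP [exists w, [&& e v w, w != u & c w == c u]]; last first.
  apply: colorable_recolour cP _ => w evw wu.
  by move: (uniq_cu w); rewrite evw wu.
pose N := [set w | e v w].
have cN : c @: N = c @: (N :\ u).
  apply/eqP; rewrite eqEsubset (imsetS _ (subD1set N u)) andbT.
  apply/subsetP => _ /imsetP[x xN ->]; have [->|xu] := eqVneq x u.
    by rewrite -cwu imset_f // in_setD1 wu inE.
  by rewrite imset_f // in_setD1 xu.
have /subsetPn[a _ aN] : ~~ ([set: 'I_k] \subset c @: N).
  apply: contraL degv => /subset_leq_card; rewrite cardsT card_ord cN -ltnNge.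
  move/leq_trans/(_ (leq_imset_card _ _)).
  by rewrite /deg -/N (cardsD1 u N) inE evu.
by move: notT; rewrite (colorable_extend cP aN).
Qed.

Lemma exists_high_deg_colorable_setC1 v k :
  connected_graph e -> ~~ colorable e setT k -> k < maxdeg e ->
  colorable e [set~ v] k -> exists2 u, k < deg e u & colorable e [set~ u] k.
Proof.
move=> conn notT kD cv.
have [/existsP[u /andP[]] | /existsPn low] :=
  boolP [exists u, (k < deg e u) && colorable e [set~ u] k]; first by exists u.
have low_deg u : colorable e [set~ u] k -> deg e u <= k.
  by move=> cu; move: (low u); rewrite cu andbT -leqNgt.
have spread x y : e x y -> colorable e [set~ x] k -> colorable e [set~ y] k.
  by move=> exy cx; apply: colorable_setC1_adj notT (low_deg x cx) cx exy.
have all_col u : colorable e [set~ u] k.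
  exact: connect_propagate spread (conn v u) cv.
suff : maxdeg e <= k by rewrite leqNgt kD.
by apply/bigmax_leqP => u _; apply/low_deg/all_col.
Qed.

End Colouring.

Theorem lemma3 (T : finType) (e : rel T) :
  simple_graph e ->
  connected_graph e ->
  (exists x y : T, e x y) ->
  chiG e = maxdeg e ->
  vs_chi_eq e 1 ->
  exists v : T, deg e v = maxdeg e /\ chi e [set~ v] = (maxdeg e).-1.
Proof.
move=> [e_sym _] conn [x [y exy]] chiD [[X [X1 chiX]] _].
have D_gt0 : 0 < maxdeg e.
  apply: leq_trans (leq_bigmax x); rewrite /deg card_gt0.
  by apply/set0Pn; exists y; rewrite inE.
have chiGk : chiG e = (maxdeg e).-1.+1 by rewrite prednK.
have notT : ~~ colorable e setT (maxdeg e).-1.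
  by apply/negP => /chi_le; rewrite -/(chiG e) chiGk ltnn.
have /cards1P[v Xv] : #|X| == 1 by rewrite X1.
have cv : colorable e [set~ v] (maxdeg e).-1.
  by have := chi_colorable e (~: X); rewrite chiX chiD Xv.
have kD : (maxdeg e).-1 < maxdeg e by rewrite ltn_predL.
have [u Du cu] := exists_high_deg_colorable_setC1 e_sym conn notT kD cv.
exists u; split; last exact: chi_setC1 chiGk cu.
by apply/eqP; rewrite eqn_leq leq_bigmax -(prednK D_gt0).
Qed.
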